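(* Let $d_1,d_2\in\mathbb{N}$ and let $X,Y\in\mathcal{M}_{d_1}\otimes\mathcal{M}_{d_1}$ satisfy: (i) $X\geq 0$ and $Y\geq 0$; (ii) $(d_2-1)X^\Gamma\geq -Y^\Gamma$ and $(d_2+1)X^\Gamma\geq Y^\Gamma$; (iii) there exists $\ket{\alpha}\in\mathbb{C}^{d_1}\otimes\mathbb{C}^{d_1}$ with $\bra{\alpha}X\ket{\alpha}=0$ and $\bra{\alpha}Y\ket{\alpha}>0$. Define on $\mathbb{C}^{d_1}\otimes\mathbb{C}^{d_1}\otimes\mathbb{C}^{d_2}\otimes\mathbb{C}^{d_2}$ (factors labelled $A_1,B_1,A_2,B_2$) \[ Z = X_{A_1B_1}\otimes(\mathbb{1}-\omega)_{A_2B_2} + Y_{A_1B_1}\otimes\omega_{A_2B_2}, \] where $\omega$ is the maximally entangled projector on $\mathbb{C}^{d_2}\otimes\mathbb{C}^{d_2}$. Then, regarded as a bipartite operator with respect to $A=A_1A_2$ and $B=B_1B_2$, $Z$ is positive semidefinite, has positive partial transpose, and satisfies $\mathrm{SN}(Z)\geq\lceil d_2/d_1\rceil$.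
   Context: $\mathcal{M}_d$: complex $d\times d$ matrices. $\omega=\ket{\Omega}\bra{\Omega}$, $\ket{\Omega}=\frac{1}{\sqrt{d_2}}\sum_i\ket{i}\otimes\ket{i}$. For $W$ on $\mathbb{C}^{d}\otimes\mathbb{C}^{d}$, $W^\Gamma=(\mathrm{id}\otimes T)(W)$ with $T$ the transposition in the computational basis; $P\geq Q$ means $P-Q$ is positive semidefinite. A bipartite positive semidefinite operator has positive partial transpose (PPT) if its partial transpose on the $B$ system is positive semidefinite. The Schmidt rank of a vector $\ket{\psi}\in\mathbb{C}^{d_A}\otimes\mathbb{C}^{d_B}$ is the rank of $\mathrm{tr}_A\ket{\psi}\bra{\psi}$. For a nonzero positive semidefinite operator $\rho$ on $\mathbb{C}^{d_A}\otimes\mathbb{C}^{d_B}$, the Schmidt number $\mathrm{SN}(\rho)$ is the minimum, over all decompositions $\rho=\sum_i p_i\ket{\psi_i}\bra{\psi_i}$ with $p_i>0$, of $\max_i$ (Schmidt rank of $\ket{\psi_i}$). $\lceil x\rceil$ is the ceiling function. *)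

From HB Require Import structures.
From mathcomp Require Import all_boot all_order all_algebra.
From mathcomp Require Import boolp reals.
From mathcomp Require Import complex mxtens.
Set Implicit Arguments. Unset Strict Implicit. Unset Printing Implicit Defensive.
Import Order.TTheory GRing.Theory Num.Theory.
Local Open Scope ring_scope.

Section QDefs.
Variable C : numClosedFieldType.

Definition adj m n (A : 'M[C]_(m, n)) : 'M[C]_(n, m) := (map_mx Num.conj A)^T.

Definition psd n (A : 'M[C]_n) : Prop :=
  adj A = A /\ forall v : 'cV[C]_n, 0 <= (adj v *m A *m v) 0 0.

(* bipartite operators on C^m (x) C^n are 'M_(m*n), basis |i,j> indexed by
   mxtens_index (i, j) (the convention of the Kronecker product *t). *)
Definition idx m n (i : 'I_m) (j : 'I_n) : 'I_(m * n) := mxtens_index (i, j).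

(* partial transpose on the second (B) factor: <ij|W^G|kl> = <il|W|kj> *)
Definition ptransB m n (W : 'M[C]_(m * n)) : 'M[C]_(m * n) :=
  \matrix_(p, q) W (idx (mxtens_unindex p).1 (mxtens_unindex q).2)
                   (idx (mxtens_unindex q).1 (mxtens_unindex p).2).

Definition ppt m n (W : 'M[C]_(m * n)) : Prop := psd W /\ psd (ptransB W).

Definition ptraceA m n (W : 'M[C]_(m * n)) : 'M[C]_n :=
  \matrix_(j, l) \sum_(i < m) W (idx i j) (idx i l).

Definition schmidt_rank m n (psi : 'cV[C]_(m * n)) : nat :=
  \rank (ptraceA (psi *m adj psi)).

Definition SN_le m n (rho : 'M[C]_(m * n)) (r : nat) : Prop :=
  exists (N : nat) (p : 'I_N -> C) (psi : 'I_N -> 'cV[C]_(m * n)),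
    [/\ forall i, 0 < p i,
        rho = \sum_(i < N) p i *: (psi i *m adj (psi i)) &
        forall i, (schmidt_rank (psi i) <= r)%N].

Lemma SN_ex_helper m n (rho : 'M[C]_(m * n)) :
  (exists r, SN_le rho r) -> exists r, `[< SN_le rho r >].
Proof. by case=> r h; exists r; apply/asboolP. Qed.

(* Schmidt number: minimal r such that SN_le rho r (0 if no decomposition). *)
Definition SN m n (rho : 'M[C]_(m * n)) : nat :=
  match pselect (exists r, SN_le rho r) with
  | left h => ex_minn (SN_ex_helper h)
  | right _ => 0%N
  end.

Definition Omega d : 'cV[C]_(d * d) :=
  \col_k (if (mxtens_unindex k).1 == (mxtens_unindex k).2
          then (sqrtC (d%:R))^-1 else 0).
Definition omega d : 'M[C]_(d * d) := Omega d *m adj (Omega d).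

(* regroup A1 B1 A2 B2 (operator on (m*n)*(p*q)) as A=A1A2, B=B1B2
   (operator on (m*p)*(n*q)) *)
Definition regroup m n p q (Z : 'M[C]_((m * n) * (p * q))) : 'M[C]_((m * p) * (n * q)) :=
  \matrix_(r, s)
    let a := mxtens_unindex (mxtens_unindex r).1 in
    let b := mxtens_unindex (mxtens_unindex r).2 in
    let a' := mxtens_unindex (mxtens_unindex s).1 in
    let b' := mxtens_unindex (mxtens_unindex s).2 in
    Z (idx (idx a.1 b.1) (idx a.2 b.2)) (idx (idx a'.1 b'.1) (idx a'.2 b'.2)).

End QDefs.

(* Z is a positive combination of tensor products of positive operators.  Its
   partial transpose is, after regrouping,
     (2 d2)^-1 [((d2 - 1) X^G + Y^G) (x) (1 + F) + ((d2 + 1) X^G - Y^G) (x) (1 - F)]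
   with F the swap, so Z is PPT.  For the Schmidt number, apply <alpha| on A1 B1
   to a decomposition Z = sum_i p_i |psi_i><psi_i|: since <alpha|X|alpha> = 0
   this gives <alpha|Y|alpha> omega, so every contracted vector is a multiple of
   |Omega>, and some multiple is nonzero.  Read as a d2 x d2 matrix that vector
   has rank d2, while it is a sum of d1 matrices of rank at most the Schmidt rank
   of psi_i; hence d2 <= d1 SR(psi_i).  Positive semidefiniteness is handled
   through decompositions into positive rank-one terms, obtained by repeated
   Schur complements. *)

From HB Require Import structures.
From mathcomp Require Import all_boot all_order all_algebra.
From mathcomp Require Import boolp reals.
From mathcomp Require Import complex mxtens.
From mathcomp Require Import ring zify.
Set Implicit Arguments. Unset Strict Implicit. Unset Printing Implicit Defensive.
Import Order.TTheory GRing.Theory Num.Theory.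
Local Open Scope ring_scope.

Section Hermitian.
Variable C : numClosedFieldType.
Implicit Types (m n p q : nat).

Lemma adjE m n (A : 'M[C]_(m, n)) i j : adj A i j = (A j i)^*.
Proof. by rewrite !mxE. Qed.

Lemma adjK m n (A : 'M[C]_(m, n)) : adj (adj A) = A.
Proof. by apply/matrixP=> i j; rewrite !adjE conjCK. Qed.

Lemma adjM m n p (A : 'M[C]_(m, n)) (B : 'M[C]_(n, p)) :
  adj (A *m B) = adj B *m adj A.
Proof. by rewrite /adj map_mxM trmx_mul. Qed.

Lemma adjD m n (A B : 'M[C]_(m, n)) : adj (A + B) = adj A + adj B.
Proof. by rewrite /adj map_mxD linearD. Qed.

Lemma adjN m n (A : 'M[C]_(m, n)) : adj (- A) = - adj A.
Proof. by rewrite /adj map_mxN linearN. Qed.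

Lemma adjZ m n c (A : 'M[C]_(m, n)) : adj (c *: A) = c^* *: adj A.
Proof. by apply/matrixP=> i j; rewrite !mxE rmorphM. Qed.

Lemma adj_tens m n p q (A : 'M[C]_(m, n)) (B : 'M[C]_(p, q)) :
  adj (A *t B) = adj A *t adj B.
Proof. by rewrite /adj map_mxT trmx_tens. Qed.

Lemma adj_scalar n c : adj (c%:M : 'M[C]_n) = c^*%:M.
Proof. by rewrite /adj map_scalar_mx tr_scalar_mx. Qed.

Lemma adj1 n : adj (1%:M : 'M[C]_n) = 1%:M.
Proof. by rewrite adj_scalar rmorph1. Qed.

Definition dotc n (x y : 'cV[C]_n) : C := (adj x *m y) 0 0.

Definition sform n (A : 'M[C]_n) (x y : 'cV[C]_n) : C := (adj x *m A *m y) 0 0.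

Lemma dotcE n (x y : 'cV[C]_n) : dotc x y = \sum_k (x k 0)^* * y k 0.
Proof. by rewrite /dotc mxE; apply: eq_bigr => k _; rewrite adjE. Qed.

Lemma dotcC n (x y : 'cV[C]_n) : dotc x y = (dotc y x)^*.
Proof. by rewrite /dotc -adjE adjM adjK. Qed.

Lemma dotc_ge0 n (x : 'cV[C]_n) : 0 <= dotc x x.
Proof. by rewrite dotcE sumr_ge0 // => k _; rewrite mulrC mul_conjC_ge0. Qed.

Lemma dotc_eq0 n (x : 'cV[C]_n) : dotc x x = 0 -> x = 0.
Proof.
rewrite dotcE => /eqP; rewrite psumr_eq0 => [/allP x0|k _]; last first.
  by rewrite mulrC mul_conjC_ge0.
apply/matrixP=> k j; rewrite ord1 mxE.
by have := x0 k (mem_index_enum _); rewrite mulrC mul_conjC_eq0 => /eqP.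
Qed.

Lemma sformE n (A : 'M[C]_n) x y :
  sform A x y = \sum_k \sum_l (x k 0)^* * A k l * y l 0.
Proof.
rewrite /sform mxE exchange_big; apply: eq_bigr=> l _; rewrite mxE mulr_suml.
by apply: eq_bigr=> k _; rewrite adjE.
Qed.

Lemma sformDl n (A : 'M[C]_n) x1 x2 y :
  sform A (x1 + x2) y = sform A x1 y + sform A x2 y.
Proof. by rewrite /sform adjD !mulmxDl mxE. Qed.

Lemma sformDr n (A : 'M[C]_n) x y1 y2 :
  sform A x (y1 + y2) = sform A x y1 + sform A x y2.
Proof. by rewrite /sform !mulmxDr mxE. Qed.

Lemma sformZl n (A : 'M[C]_n) c x y : sform A (c *: x) y = c^* * sform A x y.
Proof. by rewrite /sform adjZ -!scalemxAl mxE. Qed.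

Lemma sformZr n (A : 'M[C]_n) c x y : sform A x (c *: y) = c * sform A x y.
Proof. by rewrite /sform -!scalemxAr mxE. Qed.

Lemma sformNl n (A : 'M[C]_n) x y : sform A (- x) y = - sform A x y.
Proof. by rewrite -scaleN1r sformZl rmorphN1 mulN1r. Qed.

Lemma sformNr n (A : 'M[C]_n) x y : sform A x (- y) = - sform A x y.
Proof. by rewrite -scaleN1r sformZr mulN1r. Qed.

Lemma sform_add n (A B : 'M[C]_n) x y : sform (A + B) x y = sform A x y + sform B x y.
Proof. by rewrite /sform mulmxDr mulmxDl mxE. Qed.

Lemma sform_opp n (A : 'M[C]_n) x y : sform (- A) x y = - sform A x y.
Proof. by rewrite /sform mulmxN mulNmx mxE. Qed.

Lemma sform_scale n (A : 'M[C]_n) c x y : sform (c *: A) x y = c * sform A x y.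
Proof. by rewrite /sform -scalemxAr -scalemxAl mxE. Qed.

Lemma sform_sum n k (F : 'I_k -> 'M[C]_n) x y :
  sform (\sum_i F i) x y = \sum_i sform (F i) x y.
Proof. by rewrite /sform mulmx_sumr mulmx_suml summxE. Qed.

Lemma sform_delta n (A : 'M[C]_n) a b : sform A (delta_mx a 0) (delta_mx b 0) = A a b.
Proof.
rewrite /sform; have -> : adj (delta_mx a 0 : 'cV[C]_n) = delta_mx 0 a.
  by apply/matrixP=> i k; rewrite !mxE rmorph_nat andbC.
by rewrite -rowE -colE !mxE.
Qed.

Lemma sform_adj n (A : 'M[C]_n) x y : adj A = A -> sform A x y = (sform A y x)^*.
Proof. by move=> hA; rewrite /sform -adjE !adjM adjK hA mulmxA. Qed.

Lemma sform_rank1 n (v x y : 'cV[C]_n) :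
  sform (v *m adj v) x y = dotc x v * dotc v y.
Proof.
rewrite /sform /dotc !mulmxA -(mulmxA (adj x *m v)) {1}[adj x *m v]mx11_scalar.
by rewrite mul_scalar_mx mxE.
Qed.

Lemma psdD n (A B : 'M[C]_n) : psd A -> psd B -> psd (A + B).
Proof.
move=> [hA pA] [hB pB]; split; first by rewrite adjD hA hB.
by move=> v; rewrite mulmxDr mulmxDl mxE addr_ge0.
Qed.

Lemma psdZ n c (A : 'M[C]_n) : 0 <= c -> psd A -> psd (c *: A).
Proof.
move=> c0 [hA pA]; split; first by rewrite adjZ hA conj_Creal // ger0_real.
by move=> v; rewrite -scalemxAr -scalemxAl mxE mulr_ge0.
Qed.

Lemma psd0 n : psd (0 : 'M[C]_n).
Proof.
split; first by rewrite /adj map_mx0 trmx0.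
by move=> v; rewrite mulmx0 mul0mx mxE.
Qed.

Lemma psd_sum n k (F : 'I_k -> 'M[C]_n) : (forall i, psd (F i)) -> psd (\sum_i F i).
Proof. by move=> h; elim/big_rec: _ => [|i M _]; [exact: psd0 | apply: psdD]. Qed.

Lemma psd_rank1 n (v : 'cV[C]_n) : psd (v *m adj v).
Proof.
split=> [|w]; first by rewrite adjM adjK.
by rewrite -/(sform _ w w) sform_rank1 [dotc v w]dotcC mul_conjC_ge0.
Qed.

Lemma psd_gram m n (M : 'M[C]_(m, n)) : psd (adj M *m M).
Proof.
split=> [|x]; first by rewrite adjM adjK.
by rewrite mulmxA -mulmxA -adjM; apply: dotc_ge0.
Qed.

Lemma psd_dim0 n (A : 'M[C]_n) : n = 0%N -> psd A.
Proof.
move=> n0; split=> [|v]; first by apply/matrixP=> i; have := ltn_ord i; rewrite {2}n0.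
by rewrite mxE big1 // => i _; have := ltn_ord i; rewrite {2}n0.
Qed.

Lemma psd_entry_conj n (A : 'M[C]_n) i j : psd A -> A i j = (A j i)^*.
Proof. by case=> hA _; rewrite -{1}hA adjE. Qed.

Lemma psd_diag_ge0 n (A : 'M[C]_n) i : psd A -> 0 <= A i i.
Proof. by case=> _ /(_ (delta_mx i 0)); rewrite -/(sform _ _ _) sform_delta. Qed.

Lemma psd_diag0_row n (A : 'M[C]_n) i j : psd A -> A j j = 0 -> A j i = 0.
Proof.
move=> hA hjj; apply/eqP/negP=> /negP s0.
set s := A j i in s0; set a := A i i.
have a0 : 0 <= a := psd_diag_ge0 i hA.
have aR : a^* = a by rewrite conj_Creal // ger0_real.
have s'0 : s^* != 0 by rewrite conjC_eq0.
(* With s != 0, the form at t e_j + e_i, t = -(a + 1) / s^*, is -(a + 2) < 0. *)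
set t := - (a + 1) / s^*.
have tE : t^* = - (a + 1) / s.
  rewrite /t fmorph_div rmorphN rmorphD rmorph1.
  by congr (- (_ + 1) / _); [exact: aR | exact: conjCK].
have := hA.2 (t *: delta_mx j 0 + delta_mx i 0).
rewrite -/(sform _ _ _) !(sformDl, sformDr, sformZl, sformZr) !sform_delta hjj.
rewrite (psd_entry_conj i j hA) -/s -/a tE !mulr0 add0r.
rewrite divfK; last by rewrite -conjC_eq0.
rewrite /t divfK //.
have -> : - (a + 1) + (- (a + 1) + a) = - (a + 2) by ring.
by rewrite oppr_ge0 => /(lt_le_trans (ltr_wpDl a0 (ltr0n _ 2))); rewrite ltxx.
Qed.

Lemma psd_diag0 n (A : 'M[C]_n) : psd A -> (forall j, A j j = 0) -> A = 0.
Proof. by move=> hA h; apply/matrixP=> j l; rewrite mxE (psd_diag0_row _ hA). Qed.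

Definition rank1_comb n N (p : 'I_N -> C) (psi : 'I_N -> 'cV[C]_n) : 'M[C]_n :=
  \sum_i p i *: (psi i *m adj (psi i)).

Definition rank1_decomp n (A : 'M[C]_n) : Prop :=
  exists N (p : 'I_N -> C) (psi : 'I_N -> 'cV[C]_n),
    (forall i, 0 < p i) /\ A = rank1_comb p psi.

Lemma psd_rank1_comb n N (p : 'I_N -> C) (psi : 'I_N -> 'cV[C]_n) :
  (forall i, 0 <= p i) -> psd (rank1_comb p psi).
Proof. by move=> p0; apply: psd_sum => i; apply/psdZ/psd_rank1. Qed.

Lemma rank1_decomp0 n : rank1_decomp (0 : 'M[C]_n).
Proof.
exists 0%N, (fun _ => 1), (fun _ => 0).
by split=> [[] //|]; rewrite /rank1_comb big_ord0.
Qed.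

Lemma rank1_decompDr n (A : 'M[C]_n) c (v : 'cV[C]_n) :
  rank1_decomp A -> 0 < c -> rank1_decomp (A + c *: (v *m adj v)).
Proof.
move=> [N [p [psi [p0 ->]]]] c0.
exists N.+1, (fun j => if unlift ord_max j is Some k then p k else c).
exists (fun j => if unlift ord_max j is Some k then psi k else v).
split=> [j|]; first by case: unlift.
rewrite /rank1_comb big_ord_recr /= unlift_none; congr (_ + _).
apply: eq_bigr => j _.
have -> : widen_ord (leqnSn N) j = lift ord_max j.
  by apply: val_inj; rewrite [RHS]lift_max.
by rewrite liftK.
Qed.

Lemma psd_schur n (A : 'M[C]_n) i : psd A -> 0 < A i i ->
  psd (A - (A i i)^-1 *: (col i A *m adj (col i A))).
Proof.
move=> hA a0; set a := A i i; set v := col i A.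
have aR : a^* = a by rewrite conj_Creal // gtr0_real.
have vx x : dotc v x = sform A (delta_mx i 0) x.
  by rewrite /dotc /sform /v colE adjM hA.1.
split; first by rewrite adjD adjN adjZ adjM adjK hA.1 fmorphV /= aR.
move=> x; rewrite -/(sform _ x x); set s := sform A (delta_mx i 0) x.
set y := x - (s / a) *: delta_mx i 0.
suff -> : sform (A - a^-1 *: (v *m adj v)) x x = sform A y y by apply: hA.2.
rewrite sform_add sform_opp sform_scale sform_rank1 dotcC !vx -/s.
rewrite !(sformDl, sformDr, sformNl, sformNr, sformZl, sformZr) sform_delta -/a.
rewrite (sform_adj x (delta_mx i 0) hA.1) -/s fmorph_div /= aR.
by field; rewrite gt_eqF.
Qed.

(* Peeling off the Schur complement at a nonzero diagonal entry strictly
   shrinks the set of nonzero diagonal entries. *)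
Lemma psd_rank1_decomp n (A : 'M[C]_n) : psd A -> rank1_decomp A.
Proof.
move=> hA; have [k] := ubnP #|[set j | A j j != 0]|.
elim: k A hA => // k IH A hA; rewrite ltnS => supp_k.
have [i Aii | A0] := pickP (fun j => A j j != 0); last first.
  by rewrite (psd_diag0 hA (fun j => eqP (negbFE (A0 j)))); apply: rank1_decomp0.
have a0 : 0 < A i i by rewrite lt_def Aii psd_diag_ge0.
set A' := A - (A i i)^-1 *: (col i A *m adj (col i A)).
have A'E j : A' j j = A j j - (A i i)^-1 * (A j i * (A j i)^*).
  by rewrite !mxE big_ord1 !mxE.
have supp' : (#|[set j | A' j j != 0%R]| < #|[set j | A j j != 0%R]|)%N.
  apply/proper_card/properP; split.
    apply/subsetP => j; rewrite !inE; apply: contraNN => /eqP Ajj.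
    by rewrite A'E Ajj (psd_diag0_row i hA Ajj) mul0r mulr0 subrr.
  exists i; rewrite !inE // negbK A'E -(psd_entry_conj i i hA).
  by rewrite mulrA mulVf // mul1r subrr.
have -> : A = A' + (A i i)^-1 *: (col i A *m adj (col i A)) by rewrite subrK.
apply: rank1_decompDr; last by rewrite invr_gt0.
exact: IH (psd_schur hA a0) (leq_trans supp' supp_k).
Qed.

Lemma psd_decompP n (A : 'M[C]_n) : psd A <-> rank1_decomp A.
Proof.
split=> [|[N [p [psi [p0 ->]]]]]; first exact: psd_rank1_decomp.
by apply: psd_rank1_comb => i; apply: ltW.
Qed.

Lemma psd_herm_sqr n (H : 'M[C]_n) c :
  adj H = H -> H *m H = c *: H -> 0 < c -> psd H.
Proof.
move=> hH HH c0; have -> : H = c^-1 *: (adj H *m H).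
  by rewrite hH HH scalerA mulVf ?scale1r // gt_eqF.
by apply: psdZ (psd_gram H); rewrite invr_ge0 ltW.
Qed.

Lemma psd_1_sub_proj n (P : 'M[C]_n) :
  adj P = P -> P *m P = P -> psd (1%:M - P).
Proof.
move=> hP PP; apply: (psd_herm_sqr (c := 1)) => //.
  by rewrite adjD adjN adj1 hP.
by rewrite scale1r mulmxBl !mulmxBr !mul1mx mulmx1 PP subrr subr0.
Qed.

Lemma psd_1_add_invol n (U : 'M[C]_n) :
  adj U = U -> U *m U = 1%:M -> psd (1%:M + U).
Proof.
move=> hU UU; apply: (psd_herm_sqr (c := 2)) => //.
  by rewrite adjD adj1 hU.
by rewrite mulmxDl !mulmxDr !mul1mx mulmx1 UU scaler_nat mulr2n [U + _]addrC.
Qed.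

Lemma sum_delta n (j : 'I_n) (f : 'I_n -> C) : \sum_k (k == j)%:R * f k = f j.
Proof.
rewrite (bigD1 j) //= eqxx mul1r big1 ?addr0 // => k /negbTE ->.
by rewrite mul0r.
Qed.

Lemma idx_eq m n (a a' : 'I_m) (b b' : 'I_n) :
  (idx a b == idx a' b') = (a == a') && (b == b').
Proof. by rewrite /idx (inj_eq (can_inj (@mxtens_indexK m n))) xpair_eqE. Qed.

Lemma unindex_idx m n (a : 'I_m) (b : 'I_n) : mxtens_unindex (idx a b) = (a, b).
Proof. exact: mxtens_indexK. Qed.

Lemma idx_unindex m n (k : 'I_(m * n)) :
  idx (mxtens_unindex k).1 (mxtens_unindex k).2 = k.
Proof. by rewrite /idx -surjective_pairing mxtens_unindexK. Qed.

Lemma sum_idx m n (F : 'I_(m * n) -> C) : \sum_k F k = \sum_i \sum_j F (idx i j).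
Proof.
rewrite pair_big /= (reindex (fun ij : 'I_m * 'I_n => idx ij.1 ij.2)) //=.
by exists (@mxtens_unindex m n) => [[i j] _ | k _]; rewrite ?unindex_idx ?idx_unindex.
Qed.

Lemma matrix_idxP m n p q (A B : 'M[C]_(m * n, p * q)) :
  (forall a b a' b', A (idx a b) (idx a' b') = B (idx a b) (idx a' b')) -> A = B.
Proof.
move=> AB; apply/matrixP=> r s.
by case: (mxtens_indexP r) => a b; case: (mxtens_indexP s) => a' b'; apply: AB.
Qed.

Lemma tensmx_idx m n p q (A : 'M[C]_(m, n)) (B : 'M[C]_(p, q)) i j k l :
  (A *t B) (idx i j) (idx k l) = A i k * B j l.
Proof. exact: tensmxE. Qed.

Lemma one_idx m n (a a' : 'I_m) (b b' : 'I_n) :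
  (1%:M : 'M[C]_(m * n)) (idx a b) (idx a' b') = (a == a')%:R * (b == b')%:R.
Proof. by rewrite mxE idx_eq -natrM mulnb. Qed.

Section Tensor.
Variables m n p q : nat.
Implicit Types (A : 'M[C]_(m, n)) (B : 'M[C]_(p, q)).

Lemma tensmxDl A1 A2 B : (A1 + A2) *t B = A1 *t B + A2 *t B.
Proof. by apply/matrixP=> r s; rewrite !mxE mulrDl. Qed.

Lemma tensmxDr A B1 B2 : A *t (B1 + B2) = A *t B1 + A *t B2.
Proof. by apply/matrixP=> r s; rewrite !mxE mulrDr. Qed.

Lemma tensmxZl c A B : (c *: A) *t B = c *: (A *t B).
Proof. by apply/matrixP=> r s; rewrite !mxE mulrA. Qed.

Lemma tensmxZr c A B : A *t (c *: B) = c *: (A *t B).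
Proof. by apply/matrixP=> r s; rewrite !mxE mulrCA. Qed.

Lemma tensmxNl A B : (- A) *t B = - (A *t B).
Proof. by apply/matrixP=> r s; rewrite !mxE mulNr. Qed.

Lemma tensmxNr A B : A *t (- B) = - (A *t B).
Proof. by apply/matrixP=> r s; rewrite !mxE mulrN. Qed.

Lemma tensmx_suml k (F : 'I_k -> 'M[C]_(m, n)) B :
  (\sum_i F i) *t B = \sum_i (F i *t B).
Proof.
apply/matrixP=> r s; rewrite !mxE !summxE mulr_suml.
by apply: eq_bigr=> i _; rewrite !mxE.
Qed.

Lemma tensmx_sumr k A (F : 'I_k -> 'M[C]_(p, q)) :
  A *t (\sum_i F i) = \sum_i (A *t F i).
Proof.
apply/matrixP=> r s; rewrite !mxE !summxE mulr_sumr.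
by apply: eq_bigr=> i _; rewrite !mxE.
Qed.

End Tensor.

Lemma psd_tens m n (A : 'M[C]_m) (B : 'M[C]_n) : psd A -> psd B -> psd (A *t B).
Proof.
move=> /psd_decompP [N [p [a [p0 ->]]]] /psd_decompP [M [q [b [q0 ->]]]].
rewrite tensmx_suml; apply: psd_sum=> i; rewrite tensmx_sumr; apply: psd_sum=> j.
rewrite tensmxZl tensmxZr scalerA -tensmx_mul -adj_tens.
by apply: psdZ (psd_rank1 _); rewrite mulr_ge0 // ltW.
Qed.

Definition regroup_ord m n p q (r : 'I_((m * p) * (n * q))) : 'I_((m * n) * (p * q)) :=
  let a := mxtens_unindex (mxtens_unindex r).1 in
  let b := mxtens_unindex (mxtens_unindex r).2 in
  idx (idx a.1 b.1) (idx a.2 b.2).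

Definition regroup_vec m n p q (v : 'cV[C]_((m * n) * (p * q))) :
  'cV[C]_((m * p) * (n * q)) := \col_r v (regroup_ord r) 0.

Section Regroup.
Variables m n p q : nat.
Implicit Types W : 'M[C]_((m * n) * (p * q)).

Lemma regroupE W r s : regroup W r s = W (regroup_ord r) (regroup_ord s).
Proof. by rewrite mxE. Qed.

Lemma regroup_ord_idx (a1 : 'I_m) (a2 : 'I_p) (b1 : 'I_n) (b2 : 'I_q) :
  regroup_ord (idx (idx a1 a2) (idx b1 b2)) = idx (idx a1 b1) (idx a2 b2).
Proof. by rewrite /regroup_ord !unindex_idx. Qed.

Lemma regroupD W1 W2 : regroup (W1 + W2) = regroup W1 + regroup W2.
Proof. by apply/matrixP=> r s; rewrite !mxE /= !mxE. Qed.

Lemma regroupZ c W : regroup (c *: W) = c *: regroup W.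
Proof. by apply/matrixP=> r s; rewrite !mxE /= !mxE. Qed.

Lemma regroup_sum k (F : 'I_k -> 'M[C]_((m * n) * (p * q))) :
  regroup (\sum_i F i) = \sum_i regroup (F i).
Proof.
apply/matrixP=> r s; rewrite regroupE !summxE.
by apply: eq_bigr=> i _; rewrite regroupE.
Qed.

Lemma regroup_rank1 (v : 'cV[C]_((m * n) * (p * q))) :
  regroup (v *m adj v) = regroup_vec v *m adj (regroup_vec v).
Proof. by apply/matrixP=> r s; rewrite regroupE !mxE !big_ord1 !mxE. Qed.

Lemma psd_regroup W : psd W -> psd (regroup W).
Proof.
move=> /psd_decompP [N [c [v [c0 ->]]]].
rewrite /rank1_comb regroup_sum; apply: psd_sum=> i.
by rewrite regroupZ regroup_rank1; apply: psdZ (psd_rank1 _); apply: ltW.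
Qed.

End Regroup.

Lemma ptransB_idx m n (W : 'M[C]_(m * n)) a b a' b' :
  ptransB W (idx a b) (idx a' b') = W (idx a b') (idx a' b).
Proof. by rewrite mxE !unindex_idx. Qed.

Lemma ptransBD m n (A B : 'M[C]_(m * n)) : ptransB (A + B) = ptransB A + ptransB B.
Proof. by apply/matrixP=> r s; rewrite !mxE. Qed.

Lemma ptransBN m n (A : 'M[C]_(m * n)) : ptransB (- A) = - ptransB A.
Proof. by apply/matrixP=> r s; rewrite !mxE. Qed.

Lemma ptransB1 m n : ptransB (1%:M : 'M[C]_(m * n)) = 1%:M.
Proof.
by apply: matrix_idxP=> a b a' b'; rewrite ptransB_idx !one_idx [b' == b]eq_sym.
Qed.

Lemma ptransB_regroup_tens m n p q (X : 'M[C]_(m * n)) (P : 'M[C]_(p * q)) :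
  ptransB (regroup (X *t P)) = regroup (ptransB X *t ptransB P).
Proof.
apply: matrix_idxP=> A B A' B'.
case: (mxtens_indexP A) => a1 a2; case: (mxtens_indexP B) => b1 b2.
case: (mxtens_indexP A') => a1' a2'; case: (mxtens_indexP B') => b1' b2'.
rewrite ptransB_idx !regroupE !(regroup_ord_idx (m := m) (n := n)).
by rewrite !tensmx_idx !ptransB_idx.
Qed.

Definition swapmx d : 'M[C]_(d * d) :=
  \matrix_(r, s) (((mxtens_unindex r).1 == (mxtens_unindex s).2)%:R *
                  ((mxtens_unindex r).2 == (mxtens_unindex s).1)%:R).

Lemma swapmx_idx d (a b a' b' : 'I_d) :
  swapmx d (idx a b) (idx a' b') = (a == b')%:R * (b == a')%:R.
Proof. by rewrite mxE !unindex_idx. Qed.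

Lemma adj_swapmx d : adj (swapmx d) = swapmx d.
Proof.
apply: matrix_idxP=> a b a' b'; rewrite adjE !swapmx_idx rmorphM !rmorph_nat.
by rewrite mulrC (eq_sym b') (eq_sym a').
Qed.

Lemma swapmxK d : swapmx d *m swapmx d = 1%:M.
Proof.
apply: matrix_idxP=> a b a' b'; rewrite mxE sum_idx one_idx.
under eq_bigr => c _ do under eq_bigr => e _ do
  rewrite !swapmx_idx (eq_sym a) -!mulrA [(b == c)%:R * _]mulrCA.
under eq_bigr => c _ do rewrite sum_delta.
by rewrite sum_delta mulrC.
Qed.

Lemma Omega_idx d (a b : 'I_d) :
  Omega C d (idx a b) 0 = (a == b)%:R * (sqrtC d%:R)^-1.
Proof. by rewrite mxE unindex_idx /=; case: (a == b); rewrite ?mul1r ?mul0r. Qed.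

Lemma conj_invsqrtC_nat d : ((sqrtC (d%:R : C))^-1)^* = (sqrtC d%:R)^-1.
Proof. by rewrite conj_Creal // realV ger0_real // sqrtC_ge0 ler0n. Qed.

Lemma omega_idx d (a b a' b' : 'I_d) :
  omega C d (idx a b) (idx a' b') = (a == b)%:R * (a' == b')%:R / d%:R.
Proof.
rewrite mxE big_ord1 adjE !Omega_idx rmorphM rmorph_nat /= conj_invsqrtC_nat.
by rewrite mulrACA -invfM -expr2 sqrtCK.
Qed.

Lemma Omega_unit d : (0 < d)%N -> adj (Omega C d) *m Omega C d = 1%:M.
Proof.
move=> d0; rewrite [LHS]mx11_scalar -/(dotc _ _) dotcE sum_idx.
under eq_bigr => a _ do under eq_bigr => b _ do
  rewrite Omega_idx rmorphM rmorph_nat /= conj_invsqrtC_nat mulrACA -natrM mulnb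
          andbb (eq_sym a b).
under eq_bigr => a _ do rewrite sum_delta.
rewrite sumr_const card_ord -invfM -expr2 sqrtCK -(mulr_natr (d%:R^-1 : C)) mulVf //.
by rewrite pnatr_eq0 -lt0n.
Qed.

Lemma adj_omega d : adj (omega C d) = omega C d.
Proof. by rewrite /omega adjM adjK. Qed.

Lemma omega_idem d : omega C d *m omega C d = omega C d.
Proof.
case: d => [|d]; first by apply/matrixP=> [[]].
by rewrite /omega mulmxA -(mulmxA (Omega C _)) Omega_unit // mulmx1.
Qed.

Lemma ptransB_omega d : ptransB (omega C d) = (d%:R)^-1 *: swapmx d.
Proof.
apply: matrix_idxP=> a b a' b'; rewrite ptransB_idx omega_idx mxE swapmx_idx.
by rewrite [a' == b]eq_sym mulrC.
Qed.

Lemma psd_Z d1 d2 (X Y : 'M[C]_(d1 * d1)) : psd X -> psd Y ->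
  psd (regroup (X *t (1%:M - omega C d2) + Y *t omega C d2)).
Proof.
move=> hX hY; apply/psd_regroup/psdD; apply: psd_tens => //; last exact: psd_rank1.
by apply: psd_1_sub_proj; [apply: adj_omega | apply: omega_idem].
Qed.

Lemma ppt_Z d1 d2 (X Y : 'M[C]_(d1 * d1)) : psd X -> psd Y ->
  psd ((d2%:R - 1) *: ptransB X + ptransB Y) ->
  psd ((d2%:R + 1) *: ptransB X - ptransB Y) ->
  ppt (regroup (X *t (1%:M - omega C d2) + Y *t omega C d2)).
Proof.
move=> hX hY h1 h2; split; first exact: psd_Z.
case: d2 h1 h2 => [|d] h1 h2; first by apply: psd_dim0; rewrite !muln0.
rewrite regroupD ptransBD !ptransB_regroup_tens ptransBD ptransBN ptransB1.
rewrite ptransB_omega -regroupD.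
set e : C := d.+1%:R; set S := swapmx d.+1; set XG := ptransB X; set YG := ptransB Y.
(* 1 + S and 1 - S are twice the projections onto the symmetric and the
   antisymmetric subspace. *)
have -> : XG *t (1%:M - e^-1 *: S) + YG *t (e^-1 *: S) =
    (2 * e)^-1 *: (((e - 1) *: XG + YG) *t (1%:M + S) +
                   ((e + 1) *: XG - YG) *t (1%:M - S)).
  rewrite !(tensmxDl, tensmxDr, tensmxZl, tensmxZr, tensmxNl, tensmxNr).
  move: (XG *t 1%:M) (XG *t S) (YG *t 1%:M) (YG *t S) => T1 T2 T3 T4.
  by apply/matrixP=> r s; rewrite !mxE; field; rewrite addrC natr1 pnatr_eq0.
apply: psd_regroup; apply: psdZ; first by rewrite invr_ge0 mulr_ge0 ?ler0n.
apply: psdD; apply: psd_tens => //; apply: psd_1_add_invol.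
- exact: adj_swapmx.
- exact: swapmxK.
- by rewrite adjN adj_swapmx.
- by rewrite mulmxN mulNmx opprK swapmxK.
Qed.

Lemma mxrank_sum_le m n k (F : 'I_k -> 'M[C]_(m, n)) :
  (\rank (\sum_i F i)%R <= \sum_i \rank (F i))%N.
Proof.
elim/big_rec2: _ => [|i M r _ le_r]; first by rewrite mxrank0.
by apply: leq_trans (mxrank_add _ _) _; rewrite leq_add2l.
Qed.

Lemma gram_eq0 m n (M : 'M[C]_(m, n)) : M *m adj M = 0 -> M = 0.
Proof.
move=> MM0; apply/matrixP => i j; rewrite mxE.
have : (M *m adj M) i i = 0 by rewrite MM0 mxE.
rewrite mxE => /eqP; rewrite psumr_eq0 => [/allP Mi0|k _]; last first.
  by rewrite adjE mul_conjC_ge0.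
by have := Mi0 j (mem_index_enum _); rewrite adjE mul_conjC_eq0 => /eqP.
Qed.

Lemma mxrank_gram m n (M : 'M[C]_(m, n)) : \rank (M *m adj M) = \rank M.
Proof.
apply/eqP; rewrite eqn_leq mxrankM_maxl /=.
have /mxrankS : (kermx (M *m adj M) <= kermx M)%MS.
  apply/sub_kermxP/gram_eq0.
  by rewrite adjM mulmxA -(mulmxA (kermx _)) mulmx_ker mul0mx.
by rewrite !mxrank_ker; have := rank_leq_row M; have := rank_leq_row (M *m adj M); lia.
Qed.

Definition coefmx m n (psi : 'cV[C]_(m * n)) : 'M[C]_(m, n) :=
  \matrix_(a, b) psi (idx a b) 0.

Lemma schmidt_rankE m n (psi : 'cV[C]_(m * n)) :
  schmidt_rank psi = \rank (coefmx psi).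
Proof.
rewrite -mxrank_tr -mxrank_gram /schmidt_rank; congr (\rank _).
by apply/matrixP => j l; rewrite !mxE; apply: eq_bigr => i _; rewrite !mxE big_ord1 !mxE.
Qed.

Lemma sform_rank1_comb n N (p : 'I_N -> C) (phi : 'I_N -> 'cV[C]_n) x :
  sform (rank1_comb p phi) x x = \sum_i p i * (dotc x (phi i) * (dotc x (phi i))^*).
Proof.
rewrite sform_sum; apply: eq_bigr => i _.
by rewrite sform_scale sform_rank1 [dotc (phi i) x]dotcC.
Qed.

(* The form of the combination vanishes on the component of [phi i]
   orthogonal to [v]. *)
Lemma rank1_comb_span n N (p : 'I_N -> C) (phi : 'I_N -> 'cV[C]_n) v c :
  dotc v v = 1 -> (forall i, 0 < p i) -> rank1_comb p phi = c *: (v *m adj v) ->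
  forall i, phi i = dotc v (phi i) *: v.
Proof.
move=> v1 p0 hphi i; set l := dotc v (phi i); set x := phi i - l *: v.
have dotcxE y : dotc x y = dotc (phi i) y - l^* * dotc v y.
  by rewrite /dotc /x adjD adjN adjZ mulmxDl mulNmx -scalemxAl !mxE.
have xv : dotc x v = 0 by rewrite dotcxE v1 mulr1 dotcC -/l subrr.
have /eqP : sform (rank1_comb p phi) x x = 0.
  by rewrite hphi sform_scale sform_rank1 xv mul0r mulr0.
rewrite sform_rank1_comb psumr_eq0 => [/allP terms0|j _]; last first.
  by rewrite mulr_ge0 ?mul_conjC_ge0 // ltW.
have := terms0 i (mem_index_enum _).
rewrite mulf_eq0 gt_eqF //= mul_conjC_eq0 => /eqP xphi.
apply/eqP; rewrite -subr_eq0 -/x; apply/eqP/dotc_eq0.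
have -> : dotc x x = dotc x (phi i) - l * dotc x v.
  by rewrite {2}/x /dotc mulmxBr -scalemxAr !mxE.
by rewrite xphi xv mulr0 subrr.
Qed.

Lemma Omega_coefmx d : coefmx (Omega C d) = ((sqrtC d%:R)^-1)%:M.
Proof.
apply/matrixP => a b; rewrite !mxE unindex_idx /=.
by case: (a == b); rewrite ?mulr1n ?mulr0n.
Qed.

(* [contractmx d2 c] applies the bra [sum_k c k <k|] to the A1 B1 factors of a
   vector on (A1 A2) (B1 B2). *)
Definition contractmx d1 d2 (c : 'I_(d1 * d1) -> C) :
    'M[C]_(d2 * d2, (d1 * d2) * (d1 * d2)) :=
  \matrix_(k, r)
    let a := mxtens_unindex (mxtens_unindex r).1 in
    let b := mxtens_unindex (mxtens_unindex r).2 in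
    (a.2 == (mxtens_unindex k).1)%:R * (b.2 == (mxtens_unindex k).2)%:R *
      c (idx a.1 b.1).

Section Contraction.
Variables d1 d2 : nat.
Implicit Types (c : 'I_(d1 * d1) -> C).

Lemma contractmx_idx c a2 b2 a1 a2' b1 b2' :
  contractmx d2 c (idx a2 b2) (idx (idx a1 a2') (idx b1 b2')) =
  (a2' == a2)%:R * (b2' == b2)%:R * c (idx a1 b1).
Proof. by rewrite mxE !unindex_idx. Qed.

Lemma contractmx_conj c k r :
  (contractmx d2 c k r)^* = contractmx d2 (fun K => (c K)^*) k r.
Proof. by rewrite !mxE !rmorphM !rmorph_nat. Qed.

Lemma contractmx_sum2 c a2 b2 (g : 'I_((d1 * d2) * (d1 * d2)) -> C) :
  \sum_r contractmx d2 c (idx a2 b2) r * g r =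
  \sum_a1 \sum_b1 c (idx a1 b1) * g (idx (idx a1 a2) (idx b1 b2)).
Proof.
rewrite sum_idx sum_idx; apply: eq_bigr => a1 _.
under eq_bigr => a2' _ do rewrite sum_idx.
under eq_bigr => a2' _ do under eq_bigr => b1 _ do under eq_bigr => b2' _ do
  rewrite contractmx_idx -!mulrA.
under eq_bigr => a2' _ do under eq_bigr => b1 _ do rewrite -mulr_sumr.
under eq_bigr => a2' _ do rewrite -mulr_sumr.
rewrite sum_delta; apply: eq_bigr => b1 _.
by rewrite sum_delta.
Qed.

Lemma contractmx_sum c a2 b2 (g : 'I_((d1 * d2) * (d1 * d2)) -> C) :
  \sum_r contractmx d2 c (idx a2 b2) r * g r =
  \sum_K c K * g (idx (idx (mxtens_unindex K).1 a2) (idx (mxtens_unindex K).2 b2)).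
Proof.
rewrite contractmx_sum2 [RHS]sum_idx.
by apply: eq_bigr => a1 _; apply: eq_bigr => b1 _; rewrite unindex_idx.
Qed.

Lemma contract_regroup_tens (X : 'M[C]_(d1 * d1)) (P : 'M[C]_(d2 * d2))
    (alpha : 'cV[C]_(d1 * d1)) :
  let K := contractmx d2 (fun k => (alpha k 0)^*) in
  K *m regroup (X *t P) *m adj K = sform X alpha alpha *: P.
Proof.
move=> K; apply: matrix_idxP => a2 b2 a2' b2'.
rewrite [LHS]mxE.
under eq_bigr => s _ do rewrite adjE contractmx_conj mulrC.
rewrite contractmx_sum.
under eq_bigr => L _ do rewrite mxE contractmx_sum.
under eq_bigr => L _ do under eq_bigr => K0 _ do
  rewrite regroupE !regroup_ord_idx tensmx_idx !idx_unindex.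
rewrite mxE sformE mulr_suml.
under [RHS]eq_bigr => i _ do rewrite mulr_suml.
rewrite [RHS]exchange_big; apply: eq_bigr => L _.
rewrite mulr_sumr; apply: eq_bigr => K0 _ /=.
by rewrite conjCK; ring.
Qed.

(* Read as a d2 x d2 matrix, the contraction of psi is a sum over a1 of
   products through the (a1, .)-row block of the coefficient matrix of psi. *)
Lemma mxrank_coefmx_contract c (psi : 'cV[C]_((d1 * d2) * (d1 * d2))) :
  (\rank (coefmx (contractmx d2 c *m psi)) <= d1 * \rank (coefmx psi))%N.
Proof.
pose E a1 : 'M[C]_(d2, d1 * d2) := \matrix_(a2, A) (A == idx a1 a2)%:R.
pose F a1 : 'M[C]_(d1 * d2, d2) :=
  \matrix_(B, b2) (((mxtens_unindex B).2 == b2)%:R * c (idx a1 (mxtens_unindex B).1)).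
have -> : coefmx (contractmx d2 c *m psi) = \sum_a1 E a1 *m coefmx psi *m F a1.
  apply/matrixP => a2 b2; rewrite mxE summxE mxE contractmx_sum2; apply: eq_bigr => a1 _.
  rewrite mxE sum_idx; apply: eq_bigr => b1 _.
  under eq_bigr => b2' _ do rewrite [F _ _ _]mxE unindex_idx /= mxE.
  under eq_bigr => b2' _ do under eq_bigr => A _ do rewrite !mxE.
  under eq_bigr => b2' _ do rewrite sum_delta mulrCA.
  by rewrite sum_delta mulrC.
apply: leq_trans (mxrank_sum_le _) _.
rewrite -[X in (_ <= X * _)%N]card_ord -sum_nat_const leq_sum // => a1 _.
exact: leq_trans (mxrankM_maxl _ _) (mxrankM_maxr _ _).
Qed.

End Contraction.

Lemma schmidt_rank_witness d1 d2 (X Y : 'M[C]_(d1 * d1)) (alpha : 'cV[C]_(d1 * d1))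
    N (p : 'I_N -> C) (psi : 'I_N -> 'cV[C]_((d1 * d2) * (d1 * d2))) :
  (0 < d2)%N -> sform X alpha alpha = 0 -> 0 < sform Y alpha alpha ->
  (forall i, 0 < p i) ->
  regroup (X *t (1%:M - omega C d2) + Y *t omega C d2) = rank1_comb p psi ->
  exists i, (d2 <= d1 * schmidt_rank (psi i))%N.
Proof.
move=> d2_gt0 Xa0 Ya_gt0 p0 Zdecomp.
set K := contractmx d2 (fun k => (alpha k 0)^*).
have Omega1 : dotc (Omega C d2) (Omega C d2) = 1 by rewrite /dotc Omega_unit // mxE.
have Kdecomp : rank1_comb p (fun i => K *m psi i) = sform Y alpha alpha *: omega C d2.
  have := congr1 (fun M => K *m M *m adj K) Zdecomp.
  rewrite /= regroupD mulmxDr mulmxDl !contract_regroup_tens Xa0 scale0r add0r => ->.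
  rewrite /rank1_comb mulmx_sumr mulmx_suml; apply: eq_bigr => i _.
  by rewrite adjM -scalemxAr -scalemxAl !mulmxA.
have Kpsi := rank1_comb_span Omega1 p0 Kdecomp.
have [i l_neq0] : exists i, dotc (Omega C d2) (K *m psi i) != 0.
  apply/existsP; apply: contraTT Ya_gt0 => /existsPn l0.
  have : rank1_comb p (fun i => K *m psi i) = 0.
    apply: big1 => i _; rewrite Kpsi (eqP (negbNE (l0 i))).
    by rewrite scale0r mul0mx scaler0.
  rewrite Kdecomp => /(congr1 (fun M => sform M (Omega C d2) (Omega C d2))).
  rewrite sform_scale /omega sform_rank1 Omega1 !mulr1 => ->.
  by rewrite /sform mulmx0 mul0mx mxE ltxx.
exists i; rewrite schmidt_rankE.
have rank_Kpsi : \rank (coefmx (K *m psi i)) = d2.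
  have -> : coefmx (K *m psi i) = dotc (Omega C d2) (K *m psi i) *: coefmx (Omega C d2).
    by rewrite {1}Kpsi; apply/matrixP => a b; rewrite !mxE.
  rewrite Omega_coefmx -scalemx1 scalerA mxrank_scale_nz ?mxrank1 //.
  by rewrite mulf_neq0 // invr_eq0 sqrtC_eq0 pnatr_eq0 -lt0n.
by rewrite -{1}rank_Kpsi mxrank_coefmx_contract.
Qed.

Lemma SN_attained m n (rho : 'M[C]_(m * n)) : psd rho -> SN_le rho (SN rho).
Proof.
move=> /psd_rank1_decomp [N [p [psi [p0 rhoE]]]].
rewrite /SN; case: pselect => [SN_ex | []]; first by case: ex_minnP => r /asboolP.
by exists n, N, p, psi; split => // i; apply: rank_leq_row.
Qed.

End Hermitian.

Lemma ceil_divn_le (R : archiRealFieldType) (a b c : nat) :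
  (a <= b * c)%N -> Num.ceil (a%:R / b%:R : R) <= c%:Z.
Proof.
move=> le_abc; case: (posnP b) => [b0 | b_gt0]; first by rewrite b0 invr0 mulr0 ceil0.
by rewrite ceil_le_int ler_pdivrMr ?ltr0n // pmulrn -natrM ler_nat mulnC.
Qed.

Unset Implicit Arguments.

Theorem theorem3 (R : realType) (d1 d2 : nat) (X Y : 'M[R[i]]_(d1 * d1)) :
  psd X -> psd Y ->
  psd ((d2%:R - 1) *: ptransB X + ptransB Y) ->
  psd ((d2%:R + 1) *: ptransB X - ptransB Y) ->
  (exists alpha : 'cV[R[i]]_(d1 * d1),
      (adj alpha *m X *m alpha) 0 0 = 0 /\ 0 < (adj alpha *m Y *m alpha) 0 0) ->
  let Z := regroup (X *t (1%:M - omega R[i] d2) + Y *t omega R[i] d2) in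
  [/\ psd Z, ppt Z & Num.ceil ((d2%:R / d1%:R) : R) <= (SN Z)%:Z].
Proof.
move=> hX hY h1 h2 [alpha [Xa0 Ya_gt0]] Z.
have hZ : psd Z := psd_Z d2 hX hY.
split => //; first exact: ppt_Z.
apply: ceil_divn_le.
have [N [p [psi [p0 Zdecomp SN_ge]]]] := SN_attained hZ.
have [d2_0 | d2_gt0] := posnP d2; first by rewrite {1}d2_0.
have [i le_d2] := schmidt_rank_witness d2_gt0 Xa0 Ya_gt0 p0 Zdecomp.
exact: leq_trans le_d2 (leq_mul (leqnn _) (SN_ge i)).
Qed.
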